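(* Let $\nu\ge1$, $d:\mathbb{Z}^\nu\to\mathbb{C}$ bounded, $J=J_0+D$ on $\ell^2(\mathbb{Z}^\nu)$. Suppose that for some $j\in\{1,\dots,\nu\}$, $$\sup_{(k_1,\dots,k_{j-1},k_{j+1},\dots,k_\nu)\in\mathbb{Z}^{\nu-1}}\big|\Im\big(d(k_1,\dots,k_{j-1},n,k_{j+1},\dots,k_\nu)\big)\big|\to0$$ as $n\to+\infty$ (or as $n\to-\infty$). (For $\nu=1$ this means $\Im(d(n))\to0$ as $n\to+\infty$, or as $n\to-\infty$.) Then every boundary eigenvalue of $J$ is real.
   Context: $J_0$ is the discrete Laplacian on $\ell^2(\mathbb{Z}^\nu)$: $(J_0u)(k)=\sum_{l\in\mathbb{Z}^\nu:\|l\|_1=1}u(k+l)$, $\|l\|_1=\sum_j|l_j|$. $D$ is multiplication by $d$. The numerical range is $\operatorname{Num}(J)=\{\langle Ju,u\rangle:\|u\|=1\}$, and a boundary eigenvalue of $J$ is an eigenvalue of $J$ lying in the topological boundary of $\operatorname{Num}(J)$. *)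

From Stdlib Require Import Reals ZArith List.
Import ListNotations.
Open Scope R_scope.

Definition Cx : Type := (R * R)%type.
Definition Re (z : Cx) : R := fst z.
Definition Im (z : Cx) : R := snd z.
Definition C0 : Cx := (0, 0).
Definition Cadd (z w : Cx) : Cx := (Re z + Re w, Im z + Im w).
Definition Csub (z w : Cx) : Cx := (Re z - Re w, Im z - Im w).
Definition Cmul (z w : Cx) : Cx :=
  (Re z * Re w - Im z * Im w, Re z * Im w + Im z * Re w).
Definition Cconj (z : Cx) : Cx := (Re z, - Im z).
Definition Cmod (z : Cx) : R := sqrt (Re z * Re z + Im z * Im z).
Definition RtoC (r : R) : Cx := (r, 0).

Definition lattice (nu : nat) (k : list Z) : Prop := length k = nu.

(* k + delta * e_i  (i is 0-indexed) *)
Definition shift (k : list Z) (i : nat) (delta : Z) : list Z :=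
  firstn i k ++ (nth i k 0%Z + delta)%Z :: skipn (S i) k.

Definition lsum (f : list Z -> Cx) (F : list (list Z)) : Cx :=
  fold_right (fun k acc => Cadd (f k) acc) C0 F.

(* unconditional sum of f over the (countable) set S: the net of finite
   partial sums over finite subsets of S converges to s *)
Definition has_sum (S : list Z -> Prop) (f : list Z -> Cx) (s : Cx) : Prop :=
  forall eps : R, eps > 0 ->
    exists F0 : list (list Z), NoDup F0 /\ Forall S F0 /\
      forall F : list (list Z), NoDup F -> Forall S F -> incl F0 F ->
        Cmod (Csub (lsum f F) s) < eps.

Definition normsq_fun (u : list Z -> Cx) : list Z -> Cx :=
  fun k => RtoC (Cmod (u k) * Cmod (u k)).

Definition in_l2 (nu : nat) (u : list Z -> Cx) : Prop :=
  exists s : Cx, has_sum (lattice nu) (normsq_fun u) s.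

Definition inner (nu : nat) (v u : list Z -> Cx) (z : Cx) : Prop :=
  has_sum (lattice nu) (fun k => Cmul (v k) (Cconj (u k))) z.

(* (J0 u)(k) = sum_{l in Z^nu, ||l||_1 = 1} u(k + l) *)
Fixpoint J0_aux (u : list Z -> Cx) (k : list Z) (n : nat) : Cx :=
  match n with
  | O => C0
  | S m => Cadd (J0_aux u k m)
                (Cadd (u (shift k m 1%Z)) (u (shift k m (-1)%Z)))
  end.

Definition J0 (nu : nat) (u : list Z -> Cx) : list Z -> Cx :=
  fun k => J0_aux u k nu.

Definition Jop (nu : nat) (d : list Z -> Cx) (u : list Z -> Cx) : list Z -> Cx :=
  fun k => Cadd (J0 nu u k) (Cmul (d k) (u k)).

Definition NumRange (nu : nat) (d : list Z -> Cx) (z : Cx) : Prop :=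
  exists u : list Z -> Cx,
    has_sum (lattice nu) (normsq_fun u) (RtoC 1) /\
    inner nu (Jop nu d u) u z.

Definition is_eigenvalue (nu : nat) (d : list Z -> Cx) (lam : Cx) : Prop :=
  exists u : list Z -> Cx,
    in_l2 nu u /\ (exists k, lattice nu k /\ u k <> C0) /\
    forall k, lattice nu k -> Jop nu d u k = Cmul lam (u k).

Definition in_boundary (A : Cx -> Prop) (z : Cx) : Prop :=
  (forall eps : R, eps > 0 -> exists w, A w /\ Cmod (Csub w z) < eps) /\
  (forall eps : R, eps > 0 -> exists w, ~ A w /\ Cmod (Csub w z) < eps).

Definition is_boundary_eigenvalue (nu : nat) (d : list Z -> Cx) (lam : Cx) : Prop :=
  is_eigenvalue nu d lam /\ in_boundary (NumRange nu d) lam.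

(* Let lam be an eigenvalue with eigenvector u and suppose Im lam <> 0.
   1. Unique continuation: an eigenvector vanishing on a half-space
      {k : sigma * k_j >= N} vanishes identically, because the eigenvalue
      equation at a site next to the half-space expresses the value of u at
      the single outside neighbour through values already known to be zero.
      Since Im d tends to 0 along direction j, u therefore cannot vanish at
      every site where Im d = Im lam fails: there is a site k0 with
      u(k0) <> 0 and Im d(k0) <> Im lam.
   2. Rank-two test vectors: normalise u and put x = alpha u + beta e_k0.
      Choosing alpha = t (1 - q conj u(k0)), beta = t q gives a unit vector with
      <Jx, x> = t^2 (lam + q a + |q|^2 c), where a = 2i (Im d(k0) - Im lam) conj u(k0)
      is non-zero. A continuity (IVT) argument shows that these values cover
      a whole disc around lam, so lam is an interior point of Num(J),
      contradicting that it lies on the boundary.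
   The argument only uses pointwise identities. *)

From Pilot Require Import Defs.
From Stdlib Require Import Reals ZArith List Lra Lia Classical.
From Coquelicot Require Complex.
Import ListNotations.
Open Scope R_scope.

Lemma Cx_eq (z w : Cx) : Re z = Re w -> Im z = Im w -> z = w.
Proof. destruct z, w; unfold Re, Im; simpl; intros; subst; reflexivity. Qed.

(* Identities of complex expressions reduce to two real ring identities. *)
Ltac cx_ring :=
  apply Cx_eq; unfold Cadd, Csub, Cmul, Cconj, RtoC, C0, Re, Im; simpl; ring.

(* Our modulus is Coquelicot's, which gives us its metric lemmas. *)
Lemma Cmod_Coquelicot (z : Cx) : Cmod z = Complex.Cmod z.
Proof. unfold Cmod, Complex.Cmod, Re, Im. f_equal. simpl. ring. Qed.

Lemma Cmod_triangle (z w : Cx) : Cmod (Cadd z w) <= Cmod z + Cmod w.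
Proof. rewrite !Cmod_Coquelicot. apply Complex.Cmod_triangle. Qed.

Lemma Cmod_mul (z w : Cx) : Cmod (Cmul z w) = Cmod z * Cmod w.
Proof. rewrite !Cmod_Coquelicot. apply Complex.Cmod_mult. Qed.

Lemma Cmod_ge0 (z : Cx) : 0 <= Cmod z.
Proof. unfold Cmod. apply sqrt_pos. Qed.

Lemma Cmod_sq (z : Cx) : Cmod z * Cmod z = Re z * Re z + Im z * Im z.
Proof. unfold Cmod. apply sqrt_sqrt. nra. Qed.

Lemma Cmod_eq0 (z : Cx) : Cmod z = 0 -> z = C0.
Proof.
  intro H. assert (H2 : Cmod z * Cmod z = 0) by (rewrite H; ring).
  rewrite Cmod_sq in H2. apply Cx_eq; unfold C0, Re, Im in *; simpl; nra.
Qed.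

Lemma Cmod_pos (z : Cx) : z <> C0 -> 0 < Cmod z.
Proof.
  intro H. destruct (Cmod_ge0 z) as [|E]; auto. exfalso; apply H, Cmod_eq0; auto.
Qed.

Lemma Cmod_RtoC (r : R) : Cmod (RtoC r) = Rabs r.
Proof.
  unfold Cmod, RtoC, Re, Im; simpl. rewrite Rmult_0_l, Rplus_0_r. apply sqrt_Rsqr_abs.
Qed.

Lemma Cmod_C0 : Cmod C0 = 0.
Proof. unfold Cmod, C0, Re, Im; simpl. rewrite Rmult_0_l, Rplus_0_r. apply sqrt_0. Qed.

Lemma Cmod_conj (z : Cx) : Cmod (Cconj z) = Cmod z.
Proof. unfold Cmod, Cconj, Re, Im; simpl. f_equal. ring. Qed.

Lemma Cmod_sub_le (z w : Cx) : Cmod (Csub z w) <= Cmod z + Cmod w.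
Proof.
  replace (Csub z w) with (Cadd z (Cmul (RtoC (-1)) w)) by cx_ring.
  eapply Rle_trans; [apply Cmod_triangle|]. rewrite Cmod_mul, Cmod_RtoC.
  replace (Rabs (-1)) with 1 by (unfold Rabs; destruct Rcase_abs; lra). lra.
Qed.

Lemma inv_sqrt_square (x : R) : 0 < x -> (1 / sqrt x) * (1 / sqrt x) = / x.
Proof. intro Hx. unfold Rdiv. rewrite !Rmult_1_l, <- Rinv_mult, sqrt_sqrt by lra. reflexivity. Qed.

Lemma Cmod_sub_parts (z w : Cx) (eps : R) : Cmod (Csub z w) < eps ->
  Re z - eps < Re w /\ Im z - eps < Im w /\ Im w < Im z + eps.
Proof.
  intro H.
  assert (HR : Rabs (Re (Csub z w)) <= Cmod (Csub z w)).
  { rewrite <- (Rabs_pos_eq (Cmod _)) by apply Cmod_ge0.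
    apply Rsqr_le_abs_0. unfold Rsqr. rewrite Cmod_sq. nra. }
  assert (HI : Rabs (Im (Csub z w)) <= Cmod (Csub z w)).
  { rewrite <- (Rabs_pos_eq (Cmod _)) by apply Cmod_ge0.
    apply Rsqr_le_abs_0. unfold Rsqr. rewrite Cmod_sq. nra. }
  unfold Csub, Re, Im in *; simpl in *.
  pose proof (Rle_abs (fst z - fst w)). pose proof (Rle_abs (snd z - snd w)).
  pose proof (Rle_abs (-(snd z - snd w))). rewrite Rabs_Ropp in *. lra.
Qed.

Definition list_eq_dec_Z := list_eq_dec Z.eq_dec.

Lemma lsum_add (f g : list Z -> Cx) F :
  lsum (fun k => Cadd (f k) (g k)) F = Cadd (lsum f F) (lsum g F).
Proof. induction F; simpl. cx_ring. rewrite IHF. cx_ring. Qed.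

Lemma lsum_scale (c : Cx) (f : list Z -> Cx) F :
  lsum (fun k => Cmul c (f k)) F = Cmul c (lsum f F).
Proof. induction F; simpl. cx_ring. rewrite IHF. cx_ring. Qed.

Lemma lsum_zero (f : list Z -> Cx) F : (forall k, In k F -> f k = C0) -> lsum f F = C0.
Proof. induction F; simpl; intros H; auto. rewrite H, IHF by auto. cx_ring. Qed.

Lemma lsum_single (S : list Z -> Prop) (f : list Z -> Cx) F k0 :
  NoDup F -> Forall S F -> In k0 F -> (forall k, S k -> k <> k0 -> f k = C0) ->
  lsum f F = f k0.
Proof.
  induction F as [|a F IH]; simpl; intros ND FS Hin Hz; [contradiction|].
  inversion ND as [|? ? Ha ND']; subst. inversion FS as [|? ? Sa FS']; subst.
  destruct (list_eq_dec_Z a k0) as [->|ne].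
  - rewrite lsum_zero; [cx_ring|]. intros k Hk. apply Hz.
    + rewrite Forall_forall in FS'; auto.
    + intros ->; contradiction.
  - destruct Hin as [->|Hin]; [contradiction|].
    rewrite Hz, IH by auto. cx_ring.
Qed.

Lemma has_sum_ext S (f g : list Z -> Cx) s :
  (forall k, S k -> f k = g k) -> has_sum S f s -> has_sum S g s.
Proof.
  intros E H eps He. destruct (H eps He) as (F0 & N0 & S0 & HF).
  exists F0; split; [|split]; auto. intros F N FS I.
  replace (lsum g F) with (lsum f F); [apply HF; auto|].
  clear -E FS. induction F; simpl; auto. inversion FS; subst. rewrite E, IHF; auto.
Qed.

(* Rewriting the value of a sum (convenient as [apply has_sum_eq with t]). *)
Lemma has_sum_eq S (f : list Z -> Cx) s t : s = t -> has_sum S f s -> has_sum S f t.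
Proof. intros ->; auto. Qed.

Lemma has_sum_add S (f g : list Z -> Cx) a b : has_sum S f a -> has_sum S g b ->
  has_sum S (fun k => Cadd (f k) (g k)) (Cadd a b).
Proof.
  intros Hf Hg eps He.
  destruct (Hf (eps/2)) as (F1 & N1 & S1 & H1); [lra|].
  destruct (Hg (eps/2)) as (F2 & N2 & S2 & H2); [lra|].
  exists (nodup list_eq_dec_Z (F1 ++ F2)). split; [apply NoDup_nodup|split].
  - rewrite Forall_forall in *. intros x Hx. apply nodup_In, in_app_or in Hx.
    destruct Hx; auto.
  - intros F N FS I. rewrite lsum_add.
    assert (I1 : incl F1 F) by (intros x Hx; apply I, nodup_In, in_or_app; auto).
    assert (I2 : incl F2 F) by (intros x Hx; apply I, nodup_In, in_or_app; auto).
    specialize (H1 F N FS I1). specialize (H2 F N FS I2).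
    replace (Csub (Cadd (lsum f F) (lsum g F)) (Cadd a b)) with
      (Cadd (Csub (lsum f F) a) (Csub (lsum g F) b)) by cx_ring.
    eapply Rle_lt_trans; [apply Cmod_triangle|]. lra.
Qed.

Lemma has_sum_scale S (f : list Z -> Cx) c a :
  has_sum S f a -> has_sum S (fun k => Cmul c (f k)) (Cmul c a).
Proof.
  intros Hf eps He. pose proof (Cmod_ge0 c).
  destruct (Hf (eps / (Cmod c + 1))) as (F1 & N1 & S1 & H1).
  { apply Rdiv_lt_0_compat; lra. }
  exists F1; split; [|split]; auto. intros F N FS I. rewrite lsum_scale.
  replace (Csub (Cmul c (lsum f F)) (Cmul c a)) with (Cmul c (Csub (lsum f F) a)) by cx_ring.
  rewrite Cmod_mul. specialize (H1 F N FS I).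
  assert (eps = (Cmod c + 1) * (eps / (Cmod c + 1))) by (field; lra).
  pose proof (Cmod_ge0 (Csub (lsum f F) a)). nra.
Qed.

Lemma has_sum_single (S : list Z -> Prop) (f : list Z -> Cx) k0 :
  S k0 -> (forall k, S k -> k <> k0 -> f k = C0) -> has_sum S f (f k0).
Proof.
  intros Sk Hz eps He. exists [k0].
  split; [constructor; [simpl; tauto|constructor]|split]; [constructor; auto|].
  intros F N FS I. rewrite (lsum_single S f F k0); auto.
  - replace (Csub (f k0) (f k0)) with C0 by cx_ring. rewrite Cmod_C0; lra.
  - apply I; simpl; auto.
Qed.

Lemma lsum_normsq_bounds (u : list Z -> Cx) F k0 :
  Im (lsum (normsq_fun u) F) = 0 /\ 0 <= Re (lsum (normsq_fun u) F) /\
  (In k0 F -> Cmod (u k0) * Cmod (u k0) <= Re (lsum (normsq_fun u) F)).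
Proof.
  induction F as [|a F IH]; simpl.
  - unfold C0, Re, Im; simpl; repeat split; try lra; tauto.
  - destruct IH as (H1 & H2 & H3). unfold normsq_fun, Cadd, RtoC, Re, Im in *; simpl in *.
    pose proof (Cmod_ge0 (u a)). pose proof (Cmod_ge0 (u k0)).
    repeat split; try nra.
    intros [->|Hin]; [nra|]. specialize (H3 Hin). nra.
Qed.

Lemma has_sum_normsq_bounds S (u : list Z -> Cx) s k0 :
  has_sum S (normsq_fun u) s -> S k0 ->
  Im s = 0 /\ Cmod (u k0) * Cmod (u k0) <= Re s.
Proof.
  intros H Sk.
  assert (Key : forall eps, eps > 0 ->
            Rabs (Im s) < eps /\ Cmod (u k0) * Cmod (u k0) - eps < Re s).
  { intros eps He. destruct (H eps He) as (F0 & N0 & S0 & HF).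
    set (F := if in_dec list_eq_dec_Z k0 F0 then F0 else k0 :: F0).
    assert (HF' : Cmod (Csub (lsum (normsq_fun u) F) s) < eps).
    { unfold F; destruct in_dec; [apply HF; auto; apply incl_refl|].
      apply HF; [constructor; auto|constructor; auto|intros x Hx; simpl; auto]. }
    assert (Hin : In k0 F) by (unfold F; destruct in_dec; simpl; auto).
    destruct (lsum_normsq_bounds u F k0) as (A1 & A2 & A3). specialize (A3 Hin).
    apply Cmod_sub_parts in HF'. unfold Re, Im in *.
    split; [apply Rabs_def1|]; lra. }
  split.
  - destruct (Req_dec (Im s) 0) as [|ne]; auto. exfalso.
    destruct (Key (Rabs (Im s))) as [K _]; [apply Rabs_pos_lt; auto|lra].
  - destruct (Rle_dec (Cmod (u k0) * Cmod (u k0)) (Re s)) as [|nle]; auto. exfalso.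
    destruct (Key (Cmod (u k0) * Cmod (u k0) - Re s)) as [_ K]; lra.
Qed.

Lemma shift_length (k : list Z) i dl :
  (i < length k)%nat -> length (Defs.shift k i dl) = length k.
Proof.
  intro H. unfold Defs.shift. rewrite length_app, firstn_length_le by lia.
  cbn [length]. rewrite length_skipn. lia.
Qed.

Lemma nth_shift (k : list Z) (i : nat) (dl : Z) (m : nat) : (i < length k)%nat ->
  nth m (Defs.shift k i dl) 0%Z =
  if Nat.eq_dec m i then (nth i k 0 + dl)%Z else nth m k 0%Z.
Proof.
  intro H. unfold Defs.shift. destruct (Nat.eq_dec m i) as [->|ne].
  - rewrite app_nth2; rewrite firstn_length_le by lia; [|lia].
    rewrite Nat.sub_diag. reflexivity.
  - destruct (Nat.lt_ge_cases m i).
    + rewrite app_nth1 by (rewrite firstn_length_le; lia).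
      rewrite nth_firstn. destruct (Nat.ltb_spec m i); [reflexivity|lia].
    + rewrite app_nth2 by (rewrite firstn_length_le; lia).
      rewrite firstn_length_le by lia.
      replace (m - i)%nat with (S (m - S i)) by lia. cbn [nth].
      rewrite nth_skipn. f_equal. lia.
Qed.

Lemma shift_lattice nu k i dl :
  (i < nu)%nat -> lattice nu k -> lattice nu (Defs.shift k i dl).
Proof. unfold lattice; intros; subst. apply shift_length; auto. Qed.

Lemma shift_shift k i a b : (i < length k)%nat ->
  Defs.shift (Defs.shift k i a) i b = Defs.shift k i (a + b).
Proof.
  intro H. apply nth_ext with (d := 0%Z) (d' := 0%Z).
  - rewrite !shift_length; auto. rewrite shift_length; auto.
  - intros n Hn. rewrite !nth_shift; try rewrite shift_length; auto.
    destruct (Nat.eq_dec n i); subst; auto.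
    destruct (Nat.eq_dec i i); [lia|congruence].
Qed.

Lemma shift_zero k i : (i < length k)%nat -> Defs.shift k i 0 = k.
Proof.
  intro H. apply nth_ext with (d := 0%Z) (d' := 0%Z).
  - rewrite shift_length; auto.
  - intros n Hn. rewrite nth_shift; auto. destruct (Nat.eq_dec n i); subst; lia.
Qed.

Lemma shift_cancel nu k i a b : lattice nu k -> (i < nu)%nat -> (a + b = 0)%Z ->
  Defs.shift (Defs.shift k i a) i b = k.
Proof.
  unfold lattice; intros Lk Hi Hab. rewrite shift_shift, Hab by lia.
  apply shift_zero; lia.
Qed.

Lemma J0_aux_lin (f g : list Z -> Cx) a b k n :
  J0_aux (fun k => Cadd (Cmul a (f k)) (Cmul b (g k))) k n =
  Cadd (Cmul a (J0_aux f k n)) (Cmul b (J0_aux g k n)).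
Proof. induction n; simpl. cx_ring. rewrite IHn. cx_ring. Qed.

Lemma J0_aux_scale (f : list Z -> Cx) c k n :
  J0_aux (fun k => Cmul c (f k)) k n = Cmul c (J0_aux f k n).
Proof. induction n; simpl. cx_ring. rewrite IHn. cx_ring. Qed.

Lemma J0_aux_conj (u : list Z -> Cx) k n :
  J0_aux (fun k => Cconj (u k)) k n = Cconj (J0_aux u k n).
Proof. induction n; simpl. cx_ring. rewrite IHn. cx_ring. Qed.

Lemma Jop_lin nu d (f g : list Z -> Cx) a b k :
  Jop nu d (fun k => Cadd (Cmul a (f k)) (Cmul b (g k))) k =
  Cadd (Cmul a (Jop nu d f k)) (Cmul b (Jop nu d g k)).
Proof. unfold Jop, J0. rewrite J0_aux_lin. cx_ring. Qed.

Lemma Jop_scale nu d (f : list Z -> Cx) c k :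
  Jop nu d (fun k => Cmul c (f k)) k = Cmul c (Jop nu d f k).
Proof. unfold Jop, J0. rewrite J0_aux_scale. cx_ring. Qed.

Definition delta (k0 : list Z) : list Z -> Cx :=
  fun k => if list_eq_dec_Z k k0 then RtoC 1 else C0.

Lemma delta_self k0 : delta k0 k0 = RtoC 1.
Proof. unfold delta. destruct (list_eq_dec_Z k0 k0); congruence. Qed.

Lemma delta_other k0 k : k <> k0 -> delta k0 k = C0.
Proof. intro. unfold delta. destruct (list_eq_dec_Z k k0); congruence. Qed.

Lemma has_sum_delta nu (f : list Z -> Cx) k0 : lattice nu k0 ->
  has_sum (lattice nu) (fun k => Cmul (f k) (delta k0 k)) (f k0).
Proof.
  intro L0. eapply has_sum_eq; [|apply (has_sum_single _ _ k0); auto].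
  - rewrite delta_self. cx_ring.
  - intros k _ ne. rewrite delta_other by auto. cx_ring.
Qed.

Lemma has_sum_shifted_delta nu k0 m dl (g : list Z -> Cx) :
  (m < nu)%nat -> lattice nu k0 ->
  has_sum (lattice nu) (fun k => Cmul (delta k0 (Defs.shift k m dl)) (g k))
    (g (Defs.shift k0 m (- dl)%Z)).
Proof.
  intros Hm L0.
  set (k1 := Defs.shift k0 m (- dl)%Z).
  assert (L1 : lattice nu k1) by (apply shift_lattice; auto).
  eapply has_sum_eq; [|apply (has_sum_single _ _ k1); auto].
  - unfold k1. rewrite (shift_cancel nu), delta_self by (auto; lia). cx_ring.
  - intros k Lk ne. unfold delta.
    destruct (list_eq_dec_Z (Defs.shift k m dl) k0) as [E|]; [|cx_ring].
    exfalso. apply ne. unfold k1. rewrite <- E.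
    symmetry. apply (shift_cancel nu); auto; lia.
Qed.

Lemma J0_delta_pairing nu k0 (g : list Z -> Cx) n : (n <= nu)%nat -> lattice nu k0 ->
  has_sum (lattice nu) (fun k => Cmul (J0_aux (delta k0) k n) (g k)) (J0_aux g k0 n).
Proof.
  intros Hn L0. induction n as [|n IH]; simpl.
  - apply has_sum_ext with (f := fun _ => C0); [intros; cx_ring|].
    apply (has_sum_single (lattice nu) (fun _ => C0) k0); auto.
  - eapply has_sum_ext; [|eapply has_sum_eq;
      [|apply has_sum_add; [apply IH; lia|apply has_sum_add;
        [apply (has_sum_shifted_delta nu k0 n 1%Z g)
        |apply (has_sum_shifted_delta nu k0 n (-1)%Z g)]; auto; lia]]].
    + intros k _. simpl. cx_ring.
    + simpl. cx_ring.
Qed.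

Lemma Jop_delta_pairing nu d k0 (g : list Z -> Cx) : lattice nu k0 ->
  has_sum (lattice nu) (fun k => Cmul (Jop nu d (delta k0) k) (g k))
    (Cadd (J0 nu g k0) (Cmul (d k0) (g k0))).
Proof.
  intro L0.
  apply has_sum_ext with (f := fun k =>
    Cadd (Cmul (J0_aux (delta k0) k nu) (g k)) (Cmul (d k0) (Cmul (g k) (delta k0 k)))).
  { intros k _. unfold Jop, J0.
    destruct (list_eq_dec_Z k k0) as [->|ne].
    - rewrite delta_self. cx_ring.
    - rewrite delta_other by auto. cx_ring. }
  apply has_sum_add; [apply J0_delta_pairing; auto|].
  apply has_sum_scale, has_sum_delta; auto.
Qed.

(** Unique continuation from a half-space *)

Definition eigen_eq nu d (lam : Cx) (u : list Z -> Cx) : Prop :=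
  forall k, lattice nu k -> Jop nu d u k = Cmul lam (u k).

Lemma J0_aux_single_neighbor (u : list Z -> Cx) k n j s :
  (forall m, (m < n)%nat -> m <> j ->
     u (Defs.shift k m 1%Z) = C0 /\ u (Defs.shift k m (-1)%Z) = C0) ->
  (s = 1%Z \/ s = (-1)%Z) ->
  ((j < n)%nat -> u (Defs.shift k j s) = C0) ->
  J0_aux u k n = if lt_dec j n then u (Defs.shift k j (- s)%Z) else C0.
Proof.
  induction n; intros Hm Hs Hj; simpl; [reflexivity|].
  rewrite IHn; [| intros m Hm' ne; apply Hm; auto | auto | intros; apply Hj; auto].
  destruct (Nat.eq_dec n j) as [->|ne].
  - destruct (lt_dec j j); [lia|]. destruct (lt_dec j (S j)); [|lia].
    specialize (Hj (Nat.lt_succ_diag_r j)).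
    destruct Hs as [-> | ->]; simpl in *; rewrite Hj; cx_ring.
  - destruct (Hm n (Nat.lt_succ_diag_r n) ne) as [-> ->].
    destruct (lt_dec j n); destruct (lt_dec j (S n)); try lia; cx_ring.
Qed.

(* An eigenvector vanishing on {s * k_j >= N} vanishes everywhere: by induction
   on t it vanishes on {s * k_j >= N - t}, using the eigenvalue equation at
   k + s e_j to recover u(k). *)
Lemma eigen_vanishing_halfspace nu d lam u j s N :
  (j < nu)%nat -> (s = 1%Z \/ s = (-1)%Z) -> eigen_eq nu d lam u ->
  (forall k, lattice nu k -> (N <= s * nth j k 0)%Z -> u k = C0) ->
  forall k, lattice nu k -> u k = C0.
Proof.
  intros Hj Hs Heig Hz.
  assert (Step : forall t : nat, forall k, lattice nu k ->
            (N - Z.of_nat t <= s * nth j k 0)%Z -> u k = C0).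
  { induction t as [|t IH]; intros k Lk Hk; [apply Hz; auto; lia|].
    destruct (Z_le_gt_dec (N - Z.of_nat t) (s * nth j k 0)%Z) as [le|gt];
      [apply IH; auto|].
    assert (Ljk : (j < length k)%nat) by (unfold lattice in Lk; lia).
    set (k' := Defs.shift k j s).
    assert (Lk' : lattice nu k') by (apply shift_lattice; auto).
    (* every neighbour of k' other than k lies in the known zero region *)
    assert (Hnb : forall m dl, (m < nu)%nat -> (m <> j \/ dl = s) ->
              (dl = 1 \/ dl = -1)%Z -> u (Defs.shift k' m dl) = C0).
    { intros m dl Hm Hmj Hdl. apply IH; [apply shift_lattice; auto|].
      unfold lattice in Lk. unfold k'.
      rewrite !nth_shift by (rewrite ?shift_length; lia).
      destruct Hs, Hdl, Hmj; subst; repeat destruct Nat.eq_dec; try congruence; lia. }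
    assert (Uk' : u k' = C0) by (apply IH; auto; unfold k'; rewrite nth_shift by lia;
      destruct (Nat.eq_dec j j); [destruct Hs; subst; lia|congruence]).
    pose proof (Heig k' Lk') as E. unfold Jop, J0 in E. rewrite Uk' in E.
    rewrite (J0_aux_single_neighbor u k' nu j s) in E.
    - destruct (lt_dec j nu); [|lia]. unfold k' in E. rewrite (shift_cancel nu) in E by (auto; lia).
      transitivity (Cadd (u k) (Cmul (d (Defs.shift k j s)) C0)); [cx_ring|].
      rewrite E. cx_ring.
    - intros m Hm ne. split; apply Hnb; auto.
    - exact Hs.
    - intros _. apply Hnb; auto.
  }
  intros k Lk. apply (Step (Z.to_nat (N - s * nth j k 0%Z))); auto. lia.
Qed.

(** Eigenvectors charge a site where Im d differs from Im lam *)

Definition Im_decays_along nu (d : list Z -> Cx) (j : nat) (sigma : Z) : Prop :=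
  forall eps : R, eps > 0 -> exists N : Z, forall k, lattice nu k ->
    (N <= sigma * nth j k 0)%Z -> Rabs (Im (d k)) <= eps.

Lemma Im_decays_along_direction nu d j :
  ((forall eps : R, eps > 0 -> exists N : Z, forall n : Z, (N <= n)%Z ->
      forall k, lattice nu k -> nth j k 0%Z = n -> Rabs (Im (d k)) <= eps)
   \/
   (forall eps : R, eps > 0 -> exists N : Z, forall n : Z, (n <= N)%Z ->
      forall k, lattice nu k -> nth j k 0%Z = n -> Rabs (Im (d k)) <= eps)) ->
  exists sigma, (sigma = 1 \/ sigma = -1)%Z /\ Im_decays_along nu d j sigma.
Proof.
  intros [Hp|Hm]; [exists 1%Z|exists (-1)%Z]; split; auto; intros eps He.
  - destruct (Hp eps He) as [N HN]. exists N. intros k Lk Hk.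
    apply (HN (nth j k 0%Z)); auto; lia.
  - destruct (Hm eps He) as [N HN]. exists (- N)%Z. intros k Lk Hk.
    apply (HN (nth j k 0%Z)); auto; lia.
Qed.

(* If Im lam <> 0, a non-zero eigenvector cannot be supported in the region
   where Im d = Im lam: that region avoids a half-space, on which u would
   vanish, and unique continuation would force u = 0. *)
Lemma eigenvector_off_resonant_site nu d lam u j sigma :
  (j < nu)%nat -> (sigma = 1 \/ sigma = -1)%Z -> Im_decays_along nu d j sigma ->
  Im lam <> 0 -> eigen_eq nu d lam u ->
  (exists k, lattice nu k /\ u k <> C0) ->
  exists k0, lattice nu k0 /\ u k0 <> C0 /\ Im (d k0) <> Im lam.
Proof.
  intros Hj Hs Hdec Hl Heig [k1 [L1 U1]].
  apply NNPP. intro Hnone. apply U1.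
  assert (Hl2 : Rabs (Im lam) / 2 > 0)
    by (apply Rdiv_lt_0_compat; [apply Rabs_pos_lt; auto|lra]).
  destruct (Hdec _ Hl2) as [N HN].
  apply (eigen_vanishing_halfspace nu d lam u j sigma N); auto.
  intros k Lk Hk. apply NNPP. intro Uk. apply Hnone. exists k.
  repeat split; auto. intro E. specialize (HN k Lk Hk). rewrite E in HN.
  pose proof (Rabs_pos_lt _ Hl). lra.
Qed.

Lemma normalize_eigenvector nu d lam u k0 :
  in_l2 nu u -> eigen_eq nu d lam u -> lattice nu k0 -> u k0 <> C0 ->
  exists v, has_sum (lattice nu) (normsq_fun v) (RtoC 1) /\
            eigen_eq nu d lam v /\ v k0 <> C0.
Proof.
  intros [s Hs] Heig L0 U0.
  destruct (has_sum_normsq_bounds _ u s k0 Hs L0) as [Is Rs].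
  pose proof (Cmod_pos _ U0) as Pu.
  assert (Rsp : 0 < Re s) by nra.
  set (c := 1 / sqrt (Re s)).
  assert (cp : 0 < c) by (apply Rdiv_lt_0_compat; [lra|apply sqrt_lt_R0; lra]).
  assert (c2 : c * c = / Re s) by (apply inv_sqrt_square; lra).
  exists (fun k => Cmul (RtoC c) (u k)). split; [|split].
  - apply has_sum_eq with (Cmul (RtoC (c * c)) s).
    { rewrite c2. apply Cx_eq; unfold Cmul, RtoC, Re, Im in *; simpl; rewrite ?Is.
      - field. lra.
      - ring. }
    apply has_sum_ext with (f := fun k => Cmul (RtoC (c * c)) (normsq_fun u k));
      [|apply has_sum_scale; auto].
    intros k _. unfold normsq_fun.
    rewrite Cmod_mul, Cmod_RtoC, Rabs_pos_eq by lra. cx_ring.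
  - intros k Lk. rewrite Jop_scale, Heig by auto. cx_ring.
  - intro E. assert (Hc : Cmod (Cmul (RtoC c) (u k0)) = 0) by (rewrite E; apply Cmod_C0).
    rewrite Cmod_mul, Cmod_RtoC, Rabs_pos_eq in Hc by lra. nra.
Qed.

(** Rank-two test vectors x = alpha u + beta e_k0 *)

Definition two_term (alpha beta : Cx) (u : list Z -> Cx) (k0 : list Z) : list Z -> Cx :=
  fun k => Cadd (Cmul alpha (u k)) (Cmul beta (delta k0 k)).

Lemma two_term_normsq nu u s k0 alpha beta :
  lattice nu k0 -> has_sum (lattice nu) (normsq_fun u) s ->
  has_sum (lattice nu) (normsq_fun (two_term alpha beta u k0))
    (Cadd (Cmul (RtoC (Cmod alpha * Cmod alpha)) s)
          (RtoC (Cmod (Cadd (Cmul alpha (u k0)) beta) * Cmod (Cadd (Cmul alpha (u k0)) beta)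
                 - Cmod alpha * Cmod alpha * (Cmod (u k0) * Cmod (u k0))))).
Proof.
  intros L0 Hu.
  apply has_sum_ext with (f := fun k =>
    Cadd (Cmul (RtoC (Cmod alpha * Cmod alpha)) (normsq_fun u k))
         (Cmul (RtoC (Cmod (Cadd (Cmul alpha (u k0)) beta) * Cmod (Cadd (Cmul alpha (u k0)) beta)
                 - Cmod alpha * Cmod alpha * (Cmod (u k0) * Cmod (u k0)))) (delta k0 k))).
  - intros k _. unfold normsq_fun, two_term.
    destruct (list_eq_dec_Z k k0) as [->|ne].
    + rewrite delta_self.
      replace (Cadd (Cmul alpha (u k0)) (Cmul beta (RtoC 1)))
        with (Cadd (Cmul alpha (u k0)) beta) by cx_ring. cx_ring.
    + rewrite delta_other by auto.
      replace (Cadd (Cmul alpha (u k)) (Cmul beta C0)) with (Cmul alpha (u k)) by cx_ring.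
      rewrite Cmod_mul. cx_ring.
  - apply has_sum_add; [apply has_sum_scale; auto|].
    apply (has_sum_delta nu (fun _ => RtoC _)); auto.
Qed.

Definition pairing_Je_u nu d (u : list Z -> Cx) k0 : Cx :=
  Cadd (Cconj (J0 nu u k0)) (Cmul (d k0) (Cconj (u k0))).

Lemma two_term_form nu d lam u s k0 alpha beta :
  lattice nu k0 -> eigen_eq nu d lam u -> has_sum (lattice nu) (normsq_fun u) s ->
  inner nu (Jop nu d (two_term alpha beta u k0)) (two_term alpha beta u k0)
    (Cadd (Cmul (Cmul (RtoC (Cmod alpha * Cmod alpha)) lam) s)
    (Cadd (Cmul (Cmul alpha (Cmul lam (Cconj beta))) (u k0))
    (Cadd (Cmul (Cmul beta (Cconj alpha)) (pairing_Je_u nu d u k0))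
          (Cmul (Cmul beta (Cconj beta)) (Jop nu d (delta k0) k0))))).
Proof.
  intros L0 Heig Hu. unfold inner.
  set (J := Jop nu d (delta k0)).
  apply has_sum_ext with (f := fun k =>
    Cadd (Cmul (Cmul (RtoC (Cmod alpha * Cmod alpha)) lam) (normsq_fun u k))
    (Cadd (Cmul (Cmul alpha (Cmul lam (Cconj beta))) (Cmul (u k) (delta k0 k)))
    (Cadd (Cmul (Cmul beta (Cconj alpha)) (Cmul (J k) (Cconj (u k))))
          (Cmul (Cmul beta (Cconj beta)) (Cmul (J k) (delta k0 k)))))).
  { intros k Lk. unfold two_term. rewrite Jop_lin, Heig by auto. fold (J k).
    unfold normsq_fun. rewrite !Cmod_sq.
    destruct (list_eq_dec_Z k k0) as [->|ne].
    - rewrite delta_self. cx_ring.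
    - rewrite delta_other by auto. cx_ring. }
  apply has_sum_add; [apply has_sum_scale; auto|].
  apply has_sum_add; [apply has_sum_scale, has_sum_delta; auto|].
  apply has_sum_add; [apply has_sum_scale|apply has_sum_scale, has_sum_delta; auto].
  eapply has_sum_eq; [|apply Jop_delta_pairing; auto].
  unfold pairing_Je_u, J0. rewrite J0_aux_conj. reflexivity.
Qed.

Definition linear_coeff nu d lam (u : list Z -> Cx) k0 : Cx :=
  Csub (pairing_Je_u nu d u k0) (Cmul lam (Cconj (u k0))).

Definition quadratic_coeff nu d (u : list Z -> Cx) k0 : Cx :=
  Csub (Jop nu d (delta k0) k0) (Cmul (u k0) (pairing_Je_u nu d u k0)).

(* With alpha = t (1 - q conj u(k0)) and beta = t q, x is a unit vector as soon
   as t^2 (1 + |q|^2 (1 - |u(k0)|^2)) = 1, and then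
   <Jx, x> = t^2 (lam + q a + |q|^2 c). *)
Lemma numrange_two_term nu d lam u k0 (q : Cx) (t : R) :
  lattice nu k0 -> eigen_eq nu d lam u ->
  has_sum (lattice nu) (normsq_fun u) (RtoC 1) ->
  t * t * (1 + Cmod q * Cmod q * (1 - Cmod (u k0) * Cmod (u k0))) = 1 ->
  NumRange nu d (Cmul (RtoC (t * t)) (Cadd lam (Cadd (Cmul q (linear_coeff nu d lam u k0))
                   (Cmul (RtoC (Cmod q * Cmod q)) (quadratic_coeff nu d u k0))))).
Proof.
  intros L0 Heig Hu Ht.
  set (alpha := Cmul (RtoC t) (Csub (RtoC 1) (Cmul q (Cconj (u k0))))).
  set (beta := Cmul (RtoC t) q).
  exists (two_term alpha beta u k0). split.
  - eapply has_sum_eq; [|apply two_term_normsq; eauto].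
    rewrite !Cmod_sq in *. unfold alpha, beta.
    apply Cx_eq; unfold Cadd, Csub, Cmul, Cconj, RtoC, Re, Im in *; simpl in *; [|ring].
    match type of Ht with ?L = 1 => transitivity L; [ring|exact Ht] end.
  - eapply has_sum_eq; [|apply two_term_form; eauto].
    unfold linear_coeff, quadratic_coeff. rewrite !Cmod_sq. unfold alpha, beta.
    cx_ring.
Qed.

(* Using the eigenvalue equation at k0,
   a = 2i (Im d(k0) - Im lam) conj(u(k0)), which is non-zero at an
   off-resonant site. *)
Lemma linear_coeff_nonzero nu d lam u k0 :
  lattice nu k0 -> eigen_eq nu d lam u ->
  u k0 <> C0 -> Im (d k0) <> Im lam -> linear_coeff nu d lam u k0 <> C0.
Proof.
  intros L0 Heig U0 Hd.
  assert (Ha : linear_coeff nu d lam u k0 =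
               Cmul (Cconj (u k0)) (0, 2 * (Im (d k0) - Im lam))).
  { pose proof (Heig k0 L0) as E. unfold Jop in E.
    unfold linear_coeff, pairing_Je_u.
    replace (J0 nu u k0) with (Csub (Cmul lam (u k0)) (Cmul (d k0) (u k0)))
      by (rewrite <- E; cx_ring).
    cx_ring. }
  apply Cmod_pos in U0. intro E. rewrite Ha in E.
  assert (Hm : Cmod (Cmul (Cconj (u k0)) (0, 2 * (Im (d k0) - Im lam))) = 0)
    by (rewrite E; apply Cmod_C0).
  rewrite Cmod_mul, Cmod_conj in Hm.
  assert (H0 : Cmod (0, 2 * (Im (d k0) - Im lam)) = 0) by nra.
  apply Cmod_eq0 in H0. inversion H0. apply Hd. lra.
Qed.

(** The values t^2 (lam + q a + |q|^2 c) cover a disc around lam *)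

(* For A > 0 and 4 |w| |e| < A^2, the equation |w + r^2 e| = A r has a root
   r >= 0, by the intermediate value theorem on [0, 2|w|/A]. *)
Lemma radial_equation_solvable (w e : Cx) (A : R) :
  A > 0 -> 4 * Cmod w * Cmod e < A * A ->
  exists r, 0 <= r /\ Cmod (Cadd w (Cmul (RtoC (r * r)) e)) = A * r.
Proof.
  intros HA Hb.
  destruct (Req_dec (Cmod w) 0) as [E|NE].
  { exists 0. split; [lra|]. apply Cmod_eq0 in E. subst.
    replace (Cadd C0 (Cmul (RtoC (0 * 0)) e)) with C0 by cx_ring. rewrite Cmod_C0. ring. }
  pose proof (Cmod_ge0 w). pose proof (Cmod_ge0 e).
  set (f := fun r => A * r - Cmod (Cadd w (Cmul (RtoC (r * r)) e))).
  assert (Cf : continuity f).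
  { intro x. unfold f, Cmod, Cadd, Cmul, RtoC, Re, Im; simpl. reg.
    apply Rplus_le_le_0_compat; apply Rle_0_sqr. }
  set (r0 := 2 * Cmod w / A).
  assert (r0p : 0 < r0) by (unfold r0; apply Rdiv_lt_0_compat; lra).
  assert (F0 : f 0 < 0).
  { unfold f. replace (Cadd w (Cmul (RtoC (0 * 0)) e)) with w by cx_ring. lra. }
  assert (F1 : 0 < f r0).
  { unfold f. pose proof (Cmod_triangle w (Cmul (RtoC (r0 * r0)) e)) as Htri.
    rewrite Cmod_mul, Cmod_RtoC, Rabs_pos_eq in Htri by nra.
    assert (A * r0 = 2 * Cmod w) by (unfold r0; field; lra).
    assert (Hsmall : 4 * Cmod w * Cmod e / (A * A) < 1).
    { apply (Rmult_lt_reg_r (A * A)); [nra|].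
      unfold Rdiv. rewrite Rmult_assoc, Rinv_l by nra. lra. }
    assert (r0 * r0 * Cmod e < Cmod w).
    { unfold r0. replace (2 * Cmod w / A * (2 * Cmod w / A) * Cmod e) with
        (Cmod w * ((4 * Cmod w * Cmod e) / (A * A))) by (field; lra).
      nra. }
    lra. }
  destruct (IVT f 0 r0 Cf r0p F0 F1) as (r & Hr & Fr).
  exists r. split; [lra|]. unfold f in Fr. lra.
Qed.

Lemma divide_with_modulus (a z : Cx) (r : R) :
  a <> C0 -> Cmod z = Cmod a * r -> exists q, Cmul q a = z /\ Cmod q * Cmod q = r * r.
Proof.
  intros Ha Hz. pose proof (Cmod_pos _ Ha) as ap.
  set (na := Cmod a * Cmod a).
  assert (nap : 0 < na) by (unfold na; nra).
  exists (Cmul z (Cmul (Cconj a) (RtoC (1 / na)))). split.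
  - unfold na. rewrite Cmod_sq.
    assert (Re a * Re a + Im a * Im a <> 0) by (rewrite <- Cmod_sq; fold na; lra).
    apply Cx_eq; unfold Cadd, Cmul, Cconj, RtoC, Re, Im in *; simpl; field; auto.
  - rewrite !Cmod_mul, Hz, Cmod_conj, Cmod_RtoC, Rabs_pos_eq.
    + unfold na. field. lra.
    + unfold Rdiv. apply Rmult_le_pos; [lra|left; apply Rinv_0_lt_compat; lra].
Qed.

(* Given a <> 0 and 0 <= s <= 1, every w near lam has the form
   t^2 (lam + q a + |q|^2 c) with t^2 (1 + |q|^2 s) = 1.  Writing
   om = w - lam and e = om s - (c - lam s), this amounts to q a = om + |q|^2 e,
   which is solved by q = (om + r^2 e) / a for a root r of |om + r^2 e| = |a| r. *)
Lemma quadratic_values_cover_disc (lam a c : Cx) (s : R) :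
  a <> C0 -> 0 <= s <= 1 ->
  exists eps0, eps0 > 0 /\ forall w, Cmod (Csub w lam) < eps0 ->
    exists (q : Cx) (t : R), t * t * (1 + Cmod q * Cmod q * s) = 1 /\
      w = Cmul (RtoC (t * t)) (Cadd lam (Cadd (Cmul q a) (Cmul (RtoC (Cmod q * Cmod q)) c))).
Proof.
  intros Ha Hs.
  pose proof (Cmod_pos _ Ha) as ap.
  set (c' := Csub c (Cmul lam (RtoC s))).
  pose proof (Cmod_ge0 c').
  set (na := Cmod a * Cmod a).
  assert (nap : 0 < na) by (unfold na; nra).
  set (eps0 := na / (4 * (1 + Cmod c'))).
  assert (eps0p : 0 < eps0) by (apply Rdiv_lt_0_compat; lra).
  exists (Rmin 1 eps0). split; [apply Rmin_pos; lra|].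
  intros w Hw.
  pose proof (Rmin_l 1 eps0). pose proof (Rmin_r 1 eps0).
  set (om := Csub w lam) in *.
  set (e := Csub (Cmul om (RtoC s)) c').
  pose proof (Cmod_ge0 om). pose proof (Cmod_ge0 e).
  assert (He : Cmod e <= 1 + Cmod c').
  { eapply Rle_trans; [apply Cmod_sub_le|]. rewrite Cmod_mul, Cmod_RtoC, Rabs_pos_eq by lra.
    nra. }
  assert (Hb : 4 * Cmod om * Cmod e < Cmod a * Cmod a).
  { assert (Hlt : Cmod om * (4 * (1 + Cmod c')) < na).
    { assert (Hom : Cmod om < eps0) by lra. unfold eps0 in Hom.
      apply (Rmult_lt_compat_r (4 * (1 + Cmod c'))) in Hom; [|lra].
      unfold Rdiv in Hom. rewrite Rmult_assoc, Rinv_l in Hom by lra. lra. }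
    fold na. nra. }
  destruct (radial_equation_solvable om e (Cmod a) ap Hb) as (r & r0 & Hr).
  destruct (divide_with_modulus a (Cadd om (Cmul (RtoC (r * r)) e)) r Ha Hr)
    as (q & Hqa & Hq).
  assert (Ds : 0 < 1 + r * r * s) by nra.
  set (t := 1 / sqrt (1 + r * r * s)).
  assert (Htt : t * t = / (1 + r * r * s)) by (apply inv_sqrt_square; lra).
  exists q, t. rewrite Hqa, Hq, Htt. split; [field; lra|].
  unfold e, c', om.
  apply Cx_eq; unfold Cadd, Csub, Cmul, RtoC, Re, Im; simpl; field; lra.
Qed.

Lemma eigenvalue_interior nu d lam u k0 :
  lattice nu k0 -> has_sum (lattice nu) (normsq_fun u) (RtoC 1) ->
  eigen_eq nu d lam u -> u k0 <> C0 -> Im (d k0) <> Im lam ->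
  exists eps0, eps0 > 0 /\ forall w, Cmod (Csub w lam) < eps0 -> NumRange nu d w.
Proof.
  intros L0 Hu Heig U0 Hd.
  destruct (has_sum_normsq_bounds _ u _ k0 Hu L0) as [_ Hn0].
  unfold RtoC, Re in Hn0; simpl in Hn0. pose proof (Cmod_ge0 (u k0)).
  destruct (quadratic_values_cover_disc lam (linear_coeff nu d lam u k0)
              (quadratic_coeff nu d u k0) (1 - Cmod (u k0) * Cmod (u k0)))
    as (eps0 & Heps & Hcover).
  { apply linear_coeff_nonzero; auto. }
  { split; nra. }
  exists eps0. split; auto. intros w Hw.
  destruct (Hcover w Hw) as (q & t & Ht & ->).
  apply numrange_two_term; auto.
Qed.

Theorem mainTheorem6 (nu : nat) (d : list Z -> Cx)
  (Hnu : (1 <= nu)%nat)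
  (Hbdd : exists M : R, forall k, lattice nu k -> Cmod (d k) <= M)
  (Hdecay : exists j : nat, (j < nu)%nat /\
     ((forall eps : R, eps > 0 -> exists N : Z, forall n : Z, (N <= n)%Z ->
         forall k, lattice nu k -> nth j k 0%Z = n -> Rabs (Im (d k)) <= eps)
      \/
      (forall eps : R, eps > 0 -> exists N : Z, forall n : Z, (n <= N)%Z ->
         forall k, lattice nu k -> nth j k 0%Z = n -> Rabs (Im (d k)) <= eps)))
  : forall lam : Cx, is_boundary_eigenvalue nu d lam -> Im lam = 0.
Proof.
  intros lam [(u & Hl2 & Hnz & Heig) [_ Hnot_interior]].
  destruct (Req_dec (Im lam) 0) as [|Him]; [assumption|exfalso].
  destruct Hdecay as (j & Hj & Hdir).
  destruct (Im_decays_along_direction nu d j Hdir) as (sigma & Hsigma & Hdec).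
  destruct (eigenvector_off_resonant_site nu d lam u j sigma Hj Hsigma Hdec Him Heig Hnz)
    as (k0 & L0 & U0 & D0).
  destruct (normalize_eigenvector nu d lam u k0 Hl2 Heig L0 U0) as (v & Hv & Hev & V0).
  destruct (eigenvalue_interior nu d lam v k0 L0 Hv Hev V0 D0) as (eps & Heps & Hball).
  destruct (Hnot_interior eps Heps) as (w & Nw & Hw).
  exact (Nw (Hball w Hw)).
Qed.
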